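(* Let $\alpha$ be any graph function on a strongly connected digraph $G$. For any fair infinite sequence of raising operations starting from $\alpha$, with raising vectors $r(1),r(2),\dots$, the limit $r^*=\lim_{t\to\infty}r(t)$ exists and depends only on $\alpha$, not on the sequence of raising operations.
   Context: $G$ is a strongly connected directed graph (self-loops allowed); a graph function assigns a real weight $\alpha_{uv}$ to each edge. For a graph function $\beta$, $\beta_v^{\text{in}}=\max_{u:(u,v)\in G}\beta_{uv}$, $\beta_v^{\text{out}}=\max_{w:(v,w)\in G}\beta_{vw}$, $\rho^R_v=\max\{0,\beta_v^{\text{out}}-\beta_v^{\text{in}}\}$. A raising operation at $v$: if $\rho^R_v>0$, add $\rho^R_v/2$ to each $\beta_{uv}$ ($u\ne v$) and subtract it from each $\beta_{vw}$ ($w\ne v$); otherwise do nothing. A sequence of operations is fair if every vertex occurs infinitely often. The raising vector $r(t)$ satisfies $r(0)=0$ and, if the $t$-th operation is at $v$, $r_v(t)=r_v(t-1)+\rho^R_v/2$ (computed before the operation), other coordinates unchanged. *)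

From HB Require Import structures.
From mathcomp Require Import all_boot all_order all_algebra.
From mathcomp Require Import all_classical all_reals all_analysis.
Set Implicit Arguments. Unset Strict Implicit. Unset Printing Implicit Defensive.
Import Order.TTheory GRing.Theory Num.Theory.
Local Open Scope ring_scope.

(* A digraph on the finite vertex type V is an edge relation E : rel V
   (self-loops allowed).  A graph function is beta : V -> V -> R; only its
   values on edges (E u v) are ever consulted. *)

Section Raising.
Variables (R : realType) (V : finType) (E : rel V).

Definition strongly_connected : Prop := forall u v : V, connect E u v.

(* maximum of a finite list of reals; 0 on the empty list (never used for
   a vertex that has in- or out-edges) *)
Definition seqmax (s : seq R) : R := \big[Num.max/head 0 s]_(x <- s) x.

Definition beta_in (beta : V -> V -> R) (v : V) : R :=
  seqmax [seq beta u v | u <- enum V & E u v].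

Definition beta_out (beta : V -> V -> R) (v : V) : R :=
  seqmax [seq beta v w | w <- enum V & E v w].

Definition rhoR (beta : V -> V -> R) (v : V) : R :=
  Num.max 0 (beta_out beta v - beta_in beta v).

Definition raise (v : V) (beta : V -> V -> R) : V -> V -> R :=
  fun x y =>
    if 0 < rhoR beta v then
      if (y == v) && (x != v) then beta x y + rhoR beta v / 2
      else if (x == v) && (y != v) then beta x y - rhoR beta v / 2
      else beta x y
    else beta x y.

(* state after the first t operations of the sequence s (s t is the
   (t+1)-th operation) *)
Fixpoint beta_seq (alpha : V -> V -> R) (s : nat -> V) (t : nat) : V -> V -> R :=
  match t with
  | 0 => alpha
  | t'.+1 => raise (s t') (beta_seq alpha s t')
  end.

Fixpoint raising_vec (alpha : V -> V -> R) (s : nat -> V) (t : nat) : V -> R :=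
  match t with
  | 0 => fun _ => 0
  | t'.+1 => fun x =>
      if x == s t' then raising_vec alpha s t' x + rhoR (beta_seq alpha s t') x / 2
      else raising_vec alpha s t' x
  end.

Definition fair (s : nat -> V) : Prop :=
  forall (v : V) (N : nat), exists2 t, (N <= t)%N & s t = v.

End Raising.

From HB Require Import structures.
From mathcomp Require Import all_boot all_order all_algebra.
From mathcomp Require Import all_classical all_reals all_analysis.
From mathcomp Require Import ring lra.
Set Implicit Arguments. Unset Strict Implicit. Unset Printing Implicit Defensive.
Import Order.TTheory GRing.Theory Num.Theory.
Import numFieldNormedType.Exports.
Local Open Scope classical_set_scope.
Local Open Scope ring_scope.

(* After t operations the state is the reweighting alpha_uv + r_v(t) - r_u(t) of
   alpha, and one raising step at v replaces r_v by r_v + rho_v/2, a monotone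
   function of the whole vector r.  So r(t) increases and stays below every
   nonnegative potential q that is balanced, i.e. at which no raising operation
   has any effect.  Fairness forces the limit to be balanced itself, so it is the
   least nonnegative balanced potential, whatever the sequence.  A balanced
   potential exists: if lambda is the maximal mean weight of a cycle, minus the
   longest-walk potential for the weights alpha - lambda makes every in-max equal
   to lambda and every out-max at most lambda. *)

Section SeqMax.
Variable R : realType.

Lemma seqmax_ub (s : seq R) x : x \in s -> x <= seqmax s.
Proof. by move=> xs; exact: (le_bigmax_seq _ _ predT id xs). Qed.

Lemma seqmax_le (s : seq R) c :
  s != [::] -> (forall x, x \in s -> x <= c) -> seqmax s <= c.
Proof.
case: s => [//|a s] _ sc; rewrite /seqmax big_seq.
by apply: bigmax_le => [|x]; [exact/sc/mem_head | exact: sc].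
Qed.

Lemma seqmax_mem (s : seq R) : s != [::] -> seqmax s \in s.
Proof.
case: s => [//|a s] _; rewrite /seqmax big_seq.
apply: (big_ind (fun x => x \in a :: s)) => [|x y xs ys|//]; first exact: mem_head.
by case: leP.
Qed.

Lemma le_seqmax_map (T : eqType) (s : seq T) (g h : T -> R) :
  (forall x, x \in s -> g x <= h x) -> seqmax (map g s) <= seqmax (map h s).
Proof.
case: s => [|a s] gh; first by rewrite /seqmax !big_nil.
apply: seqmax_le => // _ /mapP [x xs ->].
exact: le_trans (gh x xs) (seqmax_ub (map_f h xs)).
Qed.

Lemma seqmax_mapDr (T : eqType) (s : seq T) (g : T -> R) c : s != [::] ->
  seqmax [seq g x + c | x <- s] = seqmax (map g s) + c.
Proof.
move=> s0; apply/le_anti/andP; split.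
- apply: seqmax_le; first by case: s s0.
  by move=> _ /mapP [x xs ->]; rewrite lerD2r seqmax_ub ?map_f.
- rewrite -lerBrDr; apply: seqmax_le; first by case: s s0.
  move=> _ /mapP [x xs ->]; rewrite lerBrDr.
  exact: seqmax_ub (map_f (fun x => g x + c) xs).
Qed.

End SeqMax.

Section Reweighting.
Variables (R : realType) (V : finType) (E : rel V) (alpha : V -> V -> R).

Definition reweight (r : V -> R) : V -> V -> R := fun x y => alpha x y + r y - r x.

Definition balanced (q : V -> R) : Prop := forall v, rhoR E (reweight q) v = 0.

Lemma rhoR_ge0 (beta : V -> V -> R) v : 0 <= rhoR E beta v.
Proof. by rewrite /rhoR le_max lexx. Qed.

Lemma reweight_shift (r : V -> R) c : reweight (fun x => r x + c) = reweight r.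
Proof. by apply: funext => x; apply: funext => y; rewrite /reweight; ring. Qed.

Lemma balanced_shift (q : V -> R) c : balanced q -> balanced (fun x => q x + c).
Proof. by move=> bq v; rewrite reweight_shift. Qed.

Lemma le_beta_out_reweight (r q : V -> R) v : (forall x, r x <= q x) ->
  beta_out E (reweight r) v + r v <= beta_out E (reweight q) v + q v.
Proof.
move=> le_rq; rewrite /beta_out.
case: [seq w <- enum V | E v w] => [|w ws]; first by rewrite /seqmax !big_nil !add0r.
have outE (p : V -> R) : [seq reweight p v x | x <- w :: ws] =
    [seq alpha v x + p x + - p v | x <- w :: ws] by [].
rewrite !outE !seqmax_mapDr // !addrNK.
by apply: le_seqmax_map => x _; rewrite lerD2l.
Qed.

Lemma le_beta_in_reweight (r q : V -> R) v : (forall x, r x <= q x) ->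
  beta_in E (reweight q) v - q v <= beta_in E (reweight r) v - r v.
Proof.
move=> le_rq; rewrite /beta_in.
case: [seq u <- enum V | E u v] => [|u us]; first by rewrite /seqmax !big_nil !add0r lerN2.
have inE (p : V -> R) : [seq reweight p x v | x <- u :: us] =
    [seq alpha x v - p x + p v | x <- u :: us].
  by apply: eq_map => x; rewrite /reweight addrAC.
rewrite !inE !seqmax_mapDr // !addrK.
by apply: le_seqmax_map => x _; rewrite lerD2l lerN2.
Qed.

(* r v + rho_v/2 = max (r v) ((O - I)/2) with O := beta_out + r v nondecreasing and
   I := beta_in - r v nonincreasing in r. *)
Lemma raise_step_mono (r q : V -> R) v : (forall x, r x <= q x) ->
  r v + rhoR E (reweight r) v / 2 <= q v + rhoR E (reweight q) v / 2.
Proof.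
move=> le_rq; have le_out := le_beta_out_reweight v le_rq.
have le_in := le_beta_in_reweight v le_rq.
have rho_q_ge0 := rhoR_ge0 (reweight q) v.
have rho_q_ge : beta_out E (reweight q) v - beta_in E (reweight q) v <= rhoR E (reweight q) v.
  by rewrite /rhoR le_max lexx orbT.
have le_rqv := le_rq v.
suff : rhoR E (reweight r) v <= 2 * (q v - r v) + rhoR E (reweight q) v by lra.
by rewrite {1}/rhoR ge_max; apply/andP; split; lra.
Qed.

End Reweighting.

Section RaisingSequence.
Variables (R : realType) (V : finType) (E : rel V) (alpha : V -> V -> R).
Variable s : nat -> V.
Local Notation r := (raising_vec E alpha s).
Local Notation reweight := (reweight alpha).
Local Notation balanced := (balanced E alpha).

Lemma beta_seq_reweight t : beta_seq E alpha s t = reweight (r t).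
Proof.
elim: t => [|t IH].
  by apply: funext => x; apply: funext => y; rewrite /reweight /= subr0 addr0.
have rho_eq0 : ~~ (0 < rhoR E (reweight (r t)) (s t)) -> rhoR E (reweight (r t)) (s t) = 0.
  by rewrite -leNgt => rho_le0; apply/le_anti; rewrite rho_le0 rhoR_ge0.
apply: funext => x; apply: funext => y; rewrite /= IH /raise.
case: (eqVneq y (s t)) => [->|ynv]; case: (eqVneq x (s t)) => [->|xnv];
  rewrite [in RHS]/reweight /= -/(reweight _) ?eqxx ?(negPf ynv) ?(negPf xnv).
all: case: ifPn => [_|/rho_eq0 rho0]; rewrite ?rho0 /reweight; ring.
Qed.

Lemma raising_vecS t x : r t.+1 x =
  if x == s t then r t x + rhoR E (reweight (r t)) x / 2 else r t x.
Proof. by rewrite /= beta_seq_reweight. Qed.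

Lemma raising_vec_nondecreasing x : {homo (r^~ x) : n m / (n <= m)%N >-> n <= m}.
Proof.
apply/nondecreasing_seqP => t; rewrite raising_vecS; case: eqP => // _.
by rewrite lerDl divr_ge0 // rhoR_ge0.
Qed.

Definition raising_limit (v : V) : R := sup (range (r^~ v)).

Section BelowBalanced.
Variable q : V -> R.
Hypotheses (q_balanced : balanced q) (q_ge0 : forall x, 0 <= q x).

Lemma raising_vec_le_balanced t x : r t x <= q x.
Proof.
elim: t x => [|t IH] x; first exact: q_ge0.
rewrite raising_vecS; case: eqP => // ->.
by have := raise_step_mono E alpha (s t) IH; rewrite q_balanced mul0r addr0.
Qed.

Lemma raising_vec_bounded v : has_ubound (range (r^~ v)).
Proof. by exists (q v) => _ [t _ <-]; exact: raising_vec_le_balanced. Qed.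

Lemma raising_vec_cvg v : r^~ v @ \oo --> raising_limit v.
Proof.
apply: nondecreasing_cvgn (raising_vec_bounded v).
exact: raising_vec_nondecreasing.
Qed.

Lemma raising_vec_le_limit t v : r t v <= raising_limit v.
Proof. by apply: ub_le_sup; [exact: raising_vec_bounded | exists t]. Qed.

Lemma raising_limit_le_balanced v : raising_limit v <= q v.
Proof.
apply: ge_sup; first by exists (r 0%N v), 0%N.
by move=> _ [t _ <-]; exact: raising_vec_le_balanced.
Qed.

Hypothesis s_fair : fair s.

(* A vertex with rho > 0 at the limit would, once raised late enough, overshoot the limit. *)
Lemma raising_limit_balanced : balanced raising_limit.
Proof.
move=> v; apply/le_anti; rewrite rhoR_ge0 andbT leNgt; apply/negP => rho_pos.
set e := rhoR E (reweight raising_limit) v / 4.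
have e_pos : 0 < e by rewrite divr_gt0.
have [N _ near_lim] : \forall t \near \oo, forall w, `|raising_limit w - r t w| < e.
  by apply: filter_forall => w; move/cvgrPdist_lt: (@raising_vec_cvg w) => /(_ e e_pos).
have [t Nt stv] := s_fair v N.
have lim_le w : raising_limit w <= r t w + e.
  by have := near_lim t Nt w; rewrite ltr_norml => /andP [_]; lra.
have := raise_step_mono E alpha v lim_le; rewrite reweight_shift.
have := raising_vec_le_limit t.+1 v; rewrite raising_vecS stv eqxx /e; lra.
Qed.

End BelowBalanced.
End RaisingSequence.

Definition least_balanced (R : realType) (V : finType) (E : rel V) (alpha : V -> V -> R)
  (v : V) : R :=
  inf [set q v | q in [set q | balanced E alpha q /\ forall x, 0 <= q x]].

Lemma raising_limit_least (R : realType) (V : finType) (E : rel V) (alpha : V -> V -> R)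
  (s : nat -> V) (q : V -> R) : balanced E alpha q -> (forall x, 0 <= q x) -> fair s ->
  raising_limit E alpha s = least_balanced E alpha.
Proof.
move=> q_bal q_ge0 s_fair; apply: funext => v; apply/le_anti/andP; split.
- apply: lb_le_inf; first by exists (q v), q.
  by move=> _ [p [p_bal p_ge0] <-]; exact: raising_limit_le_balanced.
- have : has_lbound [set p v | p in [set p | balanced E alpha p /\ forall x, 0 <= p x]].
    by exists 0 => _ [p [_ p_ge0] <-].
  move/ge_inf; apply; exists (raising_limit E alpha s) => //; split.
  + exact: raising_limit_balanced q_bal q_ge0 s_fair.
  + by move=> x; exact: (raising_vec_le_limit s q_bal q_ge0 0 x).
Qed.

Lemma nonuniq_cycle_infix (T : eqType) (x : T) (p : seq T) : ~~ uniq (x :: p) ->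
  exists p1 p2 p3, [/\ p = p1 ++ p2 ++ p3, p2 != [::], (size p2 <= size p)%N &
    last (last x p1) p2 = last x p1].
Proof.
elim: p x => [//|y p IH] x; rewrite [uniq _]/= negb_and negbK => /orP [xp|].
- case/splitPr: xp => p1 p2; exists [::], (rcons p1 x), p2; split => //=.
  + by rewrite cat_rcons.
  + by case: p1.
  + by rewrite size_rcons size_cat /= addnS ltnS leq_addr.
  + by rewrite last_rcons.
- case/IH => p1 [p2 [p3 [-> p2_nonempty p2_size p2_closed]]].
  by exists (y :: p1), p2, p3; split => //; exact: leqW.
Qed.

Fixpoint seqs_upto (T : finType) (k : nat) : seq (seq T) :=
  if k is k'.+1 then [::] :: [seq x :: p | x <- enum T, p <- seqs_upto T k']
  else [:: [::]].

Lemma mem_seqs_upto (T : finType) k (p : seq T) : (p \in seqs_upto T k) = (size p <= k)%N.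
Proof.
elim: k p => [|k IH] [|x p] //=; rewrite inE /= ltnS -IH.
apply/allpairsP/idP => [[[y q] /= [_ q_in [_ ->]]] // | p_in].
by exists (x, p); rewrite mem_enum.
Qed.

Section Walks.
Variables (R : realType) (V : finType) (a : V -> V -> R).

Fixpoint walk_weight (x : V) (p : seq V) : R :=
  if p is y :: p' then a x y + walk_weight y p' else 0.

Lemma walk_weight_cat x p1 p2 :
  walk_weight x (p1 ++ p2) = walk_weight x p1 + walk_weight (last x p1) p2.
Proof. by elim: p1 x => [|y p IH] x /=; rewrite ?add0r // IH addrA. Qed.

Lemma walk_weight_rcons x p v :
  walk_weight x (rcons p v) = walk_weight x p + a (last x p) v.
Proof. by rewrite -cats1 walk_weight_cat /= addr0. Qed.

End Walks.

Lemma walk_weight_subr (R : realType) (V : finType) (a : V -> V -> R) lam x p :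
  walk_weight (fun u v => a u v - lam) x p = walk_weight a x p - lam * (size p)%:R.
Proof.
elim: p x => [|y p IH] x /=; first by rewrite mulr0 subr0.
by rewrite IH -addn1 natrD; ring.
Qed.

Section LongestWalk.
Variables (R : realType) (V : finType) (E : rel V) (a : V -> V -> R) (c : V).
Hypothesis hSC : strongly_connected E.
Hypothesis closed_walk_le0 : forall x p, (size p <= #|V|)%N -> path E x p ->
  last x p = x -> walk_weight a x p <= 0.

Definition short_walks_to (v : V) : seq (seq V) :=
  [seq p <- seqs_upto V #|V| | path E c p && (last c p == v)].

Definition longest_walk (v : V) : R :=
  seqmax [seq walk_weight a c p | p <- short_walks_to v].

Lemma mem_short_walks_to v p :
  (p \in short_walks_to v) = [&& path E c p, last c p == v & (size p <= #|V|)%N].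
Proof. by rewrite mem_filter mem_seqs_upto andbA. Qed.

Lemma short_walks_to_nonempty v : short_walks_to v != [::].
Proof.
have /connectP [p p_path p_last] := hSC c v.
case/shortenP: p_path p_last => p' p'_path p'_uniq _ p'_last.
apply/eqP => no_walks; have : p' \in short_walks_to v.
  rewrite mem_short_walks_to p'_path -p'_last eqxx /=.
  by have := max_card (mem (c :: p')); rewrite (card_uniqP p'_uniq) => /ltnW.
by rewrite no_walks.
Qed.

Lemma longest_walk_attained v : exists p, [/\ path E c p, last c p = v,
  (size p <= #|V|)%N & walk_weight a c p = longest_walk v].
Proof.
have : [seq walk_weight a c p | p <- short_walks_to v] != [::].
  by rewrite -size_eq0 size_map size_eq0 short_walks_to_nonempty.
move/seqmax_mem/mapP => [p]; rewrite mem_short_walks_to => /and3P [p_path /eqP p_last p_size] p_max.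
by exists p.
Qed.

(* Pigeonhole: the first #|V| steps revisit a vertex, and the closed subwalk in
   between has nonpositive weight. *)
Lemma walk_shorten x p : (#|V| <= size p)%N -> path E x p ->
  exists p', [/\ path E x p', last x p' = last x p, (size p' < size p)%N &
    walk_weight a x p <= walk_weight a x p'].
Proof.
move=> p_long p_path.
have : ~~ uniq (x :: take #|V| p).
  apply/negP => /card_uniqP card_p; have := max_card (mem (x :: take #|V| p)).
  by rewrite card_p /= size_take_min (minn_idPl p_long) ltnn.
case/nonuniq_cycle_infix => p1 [p2 [p3 [take_p p2_nonempty p2_size p2_closed]]].
set d := drop #|V| p; have p_split : p = p1 ++ p2 ++ p3 ++ d.
  by rewrite -[LHS](cat_take_drop #|V|) take_p -!catA.
move: p_path; rewrite p_split !cat_path p2_closed => /and3P [p1_path p2_path p3_path].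
have p2_le0 : walk_weight a (last x p1) p2 <= 0.
  apply: closed_walk_le0 => //; apply: leq_trans p2_size _.
  by rewrite size_take_min geq_minl.
exists (p1 ++ p3 ++ d); split.
- by rewrite !cat_path p1_path.
- by rewrite !last_cat p2_closed.
- by rewrite !size_cat ltn_add2l -{1}[(size p3 + _)%N]add0n ltn_add2r lt0n size_eq0.
- by rewrite !walk_weight_cat p2_closed; lra.
Qed.

Lemma longest_walk_ub p : path E c p -> walk_weight a c p <= longest_walk (last c p).
Proof.
have [n] := ubnP (size p); elim: n => // n IH in p *; rewrite ltnS => p_size p_path.
have [p_short|p_long] := leqP (size p) #|V|.
  by apply: seqmax_ub; apply: map_f; rewrite mem_short_walks_to p_path eqxx.
have [p' [p'_path p'_last p'_size p'_weight]] := walk_shorten (ltnW p_long) p_path.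
by rewrite -p'_last; apply: le_trans p'_weight (IH _ _ p'_path); exact: leq_trans p'_size _.
Qed.

Lemma longest_walk_edge u v : E u v -> longest_walk u + a u v <= longest_walk v.
Proof.
move=> uv; have [p [p_path p_last _ <-]] := longest_walk_attained u.
have := @longest_walk_ub (rcons p v).
by rewrite rcons_path p_path p_last uv last_rcons walk_weight_rcons p_last; apply.
Qed.

Lemma longest_walk_tight_of_walk v p : path E c p -> last c p = v -> p != [::] ->
  walk_weight a c p = longest_walk v -> exists2 u, E u v & longest_walk v = longest_walk u + a u v.
Proof.
case/lastP: p => [//|p w]; rewrite rcons_path last_rcons => /andP [p_path p_w] <- _.
rewrite walk_weight_rcons => p_weight; exists (last c p) => //.
apply/le_anti; rewrite longest_walk_edge // andbT -p_weight lerD2r.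
exact: longest_walk_ub.
Qed.

Lemma longest_walk_source : longest_walk c = 0.
Proof.
apply/le_anti/andP; split; last exact: (@longest_walk_ub [::]).
have [p [p_path p_last p_size <-]] := longest_walk_attained c.
exact: closed_walk_le0.
Qed.

Lemma longest_walk_tight (C : seq V) : path E c C -> last c C = c -> C != [::] ->
  walk_weight a c C = 0 -> forall v, exists2 u, E u v & longest_walk v = longest_walk u + a u v.
Proof.
move=> C_path C_last C_nonempty C_weight v.
have [p [p_path p_last _ p_weight]] := longest_walk_attained v.
have [p_nil|p_nonempty] := eqVneq p [::].
  move: p_last; rewrite p_nil /= => <-.
  by apply: longest_walk_tight_of_walk C_path C_last C_nonempty _; rewrite longest_walk_source.
exact: longest_walk_tight_of_walk p_path p_last p_nonempty p_weight.
Qed.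

End LongestWalk.

Section MaxCycleMean.
Variables (R : realType) (V : finType) (E : rel V) (alpha : V -> V -> R).

Definition short_cycles : seq (V * seq V) :=
  [seq xp <- [seq (x, p) | x <- enum V, p <- seqs_upto V #|V|] |
     [&& xp.2 != [::], path E xp.1 xp.2 & last xp.1 xp.2 == xp.1]].

Definition max_cycle_mean : R :=
  seqmax [seq walk_weight alpha xp.1 xp.2 / (size xp.2)%:R | xp <- short_cycles].

Lemma mem_short_cycles x p : ((x, p) \in short_cycles) =
  [&& p != [::], path E x p, last x p == x & (size p <= #|V|)%N].
Proof.
rewrite mem_filter /= -!andbA; congr [&& _, _, _ & _].
apply/allpairsP/idP => [[[y q] [_ q_in [_ ->]]]|p_size]; first by rewrite -mem_seqs_upto.
by exists (x, p); rewrite mem_enum mem_seqs_upto.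
Qed.

Lemma short_cycles_nonempty : strongly_connected E -> forall u v, E u v -> short_cycles != [::].
Proof.
move=> hSC u v uv; have /connectP [p p_path p_last] := hSC v u.
case/shortenP: p_path p_last => p' p'_path p'_uniq _ p'_last.
apply/eqP => no_cycles; have : (u, v :: p') \in short_cycles.
  rewrite mem_short_cycles /= uv p'_path -p'_last eqxx /=.
  by have := max_card (mem (v :: p')); rewrite (card_uniqP p'_uniq).
by rewrite no_cycles.
Qed.

Local Notation alpha_sub_mean := (fun u v => alpha u v - max_cycle_mean).

Lemma max_cycle_mean_ub x p : (size p <= #|V|)%N -> path E x p -> last x p = x ->
  walk_weight alpha_sub_mean x p <= 0.
Proof.
move=> p_size p_path p_last; rewrite walk_weight_subr subr_le0.
have [->|p_nonempty] := eqVneq p [::]; first by rewrite mulr0.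
rewrite -ler_pdivrMr ?ltr0n ?lt0n ?size_eq0 //.
apply/seqmax_ub/mapP; exists (x, p) => //.
by rewrite mem_short_cycles p_nonempty p_path p_last eqxx.
Qed.

Lemma max_cycle_mean_attained : short_cycles != [::] -> exists x p,
  [/\ path E x p, last x p = x, p != [::] & walk_weight alpha_sub_mean x p = 0].
Proof.
rewrite -size_eq0 -(size_map (fun xp => walk_weight alpha xp.1 xp.2 / (size xp.2)%:R)) size_eq0.
move/seqmax_mem/mapP => [[x p]].
rewrite mem_short_cycles => /and4P [p_nonempty p_path /eqP p_last _].
rewrite -/max_cycle_mean /= => mean_p; exists x, p; split => //.
by rewrite walk_weight_subr mean_p divfK ?subrr // pnatr_eq0 size_eq0.
Qed.

End MaxCycleMean.

Section BalancedExistence.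
Variables (R : realType) (V : finType) (E : rel V) (alpha : V -> V -> R).

(* The reweighting by -y makes every in-max equal to lam and every out-max at most lam. *)
Lemma balanced_opp_potential (y : V -> R) (lam : R) :
  (forall u v, E u v -> y u + (alpha u v - lam) <= y v) ->
  (forall v, exists2 u, E u v & y v = y u + (alpha u v - lam)) ->
  (forall v, exists w, E v w) -> balanced E alpha (fun x => - y x).
Proof.
move=> y_edge y_tight out_edge v.
have [u uv yv] := y_tight v; have [w vw] := out_edge v.
have in_ge : lam <= beta_in E (reweight alpha (fun x => - y x)) v.
  have u_in : u \in [seq x <- enum V | E x v] by rewrite mem_filter uv mem_enum.
  apply: le_trans (seqmax_ub (map_f ((reweight alpha (fun x => - y x))^~ v) u_in)).
  by rewrite /reweight yv; lra.
have out_le : beta_out E (reweight alpha (fun x => - y x)) v <= lam.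
  apply: seqmax_le => [|_ /mapP [z + ->]].
    by rewrite -size_eq0 size_map size_eq0 -has_filter; apply/hasP; exists w; rewrite ?mem_enum.
  rewrite mem_filter => /andP [vz _]; have := y_edge _ _ vz; rewrite /reweight; lra.
by apply/max_idPl; lra.
Qed.

Hypothesis hSC : strongly_connected E.

Lemma balanced_exists : exists q, balanced E alpha q.
Proof.
have [[u0 [v0 uv0]]|no_edge] := pselect (exists u v, E u v); last first.
  have noE x y : E x y = false by apply/negP => xy; apply: no_edge; exists x, y.
  exists (fun=> 0) => v; rewrite /rhoR /beta_out /beta_in.
  rewrite (@eq_filter _ (E v) pred0) => [|w]; last exact: noE.
  rewrite (@eq_filter _ (E^~ v) pred0) => [|u]; last exact: noE.
  by rewrite filter_pred0 /seqmax big_nil subrr maxxx.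
have [c [C [C_path C_last C_nonempty C_weight]]] :=
  max_cycle_mean_attained alpha (short_cycles_nonempty hSC uv0).
have closed_le0 := @max_cycle_mean_ub R V E alpha.
exists (fun x => - longest_walk E (fun u v => alpha u v - max_cycle_mean E alpha) c x).
apply: (balanced_opp_potential (lam := max_cycle_mean E alpha)).
- exact: longest_walk_edge c hSC closed_le0.
- by move=> v; exact: (longest_walk_tight hSC closed_le0 C_path C_last C_nonempty C_weight v).
- move=> v; have /connectP [[|w p] /= p_path p_last] := hSC v u0.
    by exists v0; rewrite -p_last.
  by exists w; case/andP: p_path.
Qed.

Lemma balanced_nonneg_exists : exists2 q, balanced E alpha q & forall x, 0 <= q x.
Proof.
have [q q_bal] := balanced_exists.
exists (fun x => q x + \big[Num.max/0]_w - q w); first exact: balanced_shift.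
by move=> x; rewrite -lerBlDl sub0r (le_bigmax _ (fun w => - q w)).
Qed.

End BalancedExistence.

Theorem lemma3 (R : realType) (V : finType) (E : rel V)
  (hSC : strongly_connected E) (alpha : V -> V -> R) :
  exists rstar : V -> R,
    forall s : nat -> V, fair s ->
      forall v : V, (fun t => raising_vec E alpha s t v) @ \oo --> rstar v.
Proof.
have [q q_bal q_ge0] := balanced_nonneg_exists alpha hSC.
exists (least_balanced E alpha) => s s_fair v.
rewrite -(raising_limit_least q_bal q_ge0 s_fair).
exact: raising_vec_cvg q_bal q_ge0 v.
Qed.
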